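(* Let $X$ be a set and let $\mathcal{L}$ be a nest on $X$. A set $M\in\mathcal{L}$ is closed in the Alexandroff topology determined by $\triangleleft_{\mathcal{L}}$ if and only if $M=\bigcap\{L\in\mathcal{L} : M\subsetneq L\}$.
   Context: A nest on $X$ is a family of subsets of $X$ totally ordered by inclusion. Define $x\triangleleft_{\mathcal{L}} y$ iff there exists $L\in\mathcal{L}$ with $x\in L$ and $y\notin L$. For $A\subseteq X$ let ${\uparrow}A=\{x\in X : \exists y\in A,\ y\triangleleft_{\mathcal{L}} x\}$. The Alexandroff topology determined by $\triangleleft_{\mathcal{L}}$ consists of the sets $U\subseteq X$ with $U={\uparrow}U$; closed sets are their complements. *)

From mathcomp Require Import all_boot.
From mathcomp Require Import boolp classical_sets.
Set Implicit Arguments. Unset Strict Implicit. Unset Printing Implicit Defensive.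
Local Open Scope classical_set_scope.

Definition nest (X : Type) (L : set (set X)) : Prop :=
  forall A B, L A -> L B -> A `<=` B \/ B `<=` A.

Definition nest_rel (X : Type) (L : set (set X)) (x y : X) : Prop :=
  exists2 A, L A & A x /\ ~ A y.

Definition nest_up (X : Type) (L : set (set X)) (A : set X) : set X :=
  [set x | exists2 y, A y & nest_rel L y x].

Definition alex_open (X : Type) (L : set (set X)) (U : set X) : Prop :=
  U = nest_up L U.

Definition alex_closed (X : Type) (L : set (set X)) (F : set X) : Prop :=
  alex_open L (~` F).

From mathcomp Require Import all_boot.
From mathcomp Require Import boolp classical_sets.
Local Open Scope classical_set_scope.

(* Since L is a nest, a member A of L that separates a point of ~` M from x
   must strictly contain M; conversely any A of L strictly containing M has a
   point outside M, which then precedes every x outside A. So the up-set of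
   ~` M is the union of the complements of the strict supersets of M in L,
   and M is closed iff M is the intersection of those supersets. *)

Lemma nest_up_setC {X : Type} {L : set (set X)} (hL : nest L)
    {M : set X} (hM : L M) :
  nest_up L (~` M) = \bigcup_(A in [set A | L A /\ M `<` A]) ~` A.
Proof.
apply/seteqP; split => x /=.
- move=> [y My [A LA [Ay Ax]]]; exists A => //; split => //.
  have MA : M `<=` A by case: (hL _ _ LA hM) => // /(_ y Ay).
  by split=> // /(_ y Ay).
- move=> [A [LA [MA AM]] Ax].
  have [y [Ay My]] := nonsubset AM.
  by exists y => //; exists A.
Qed.

Theorem proposition3p8 (X : Type) (L : set (set X)) (hL : nest L)
  (M : set X) (hM : L M) :
  alex_closed L M <-> M = \bigcap_(A in [set A | L A /\ M `<` A]) A.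
Proof.
rewrite /alex_closed /alex_open (nest_up_setC hL hM) -setC_bigcap.
by split=> [/setC_inj | /(congr1 setC)].
Qed.
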